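(* Let $X$ be a connected finite rack. There exists $N$ (depending on $X$) such that for every integer $n\ge N$ and every $(x_1,\dots,x_n)\in X^n$ such that $x_1,\dots,x_n$ generate $X$, the image $H$ in $S_n$ of the stabilizer $\operatorname{Stab}(x_1,\dots,x_n)\le B_n$ under the homomorphism $B_n\to S_n$ is either $A_n$ or $S_n$. If moreover $X$ is a quandle, then $H=S_n$.
   Context: A rack is a set $X$ with a binary operation $(x,y)\mapsto x^y$ such that for each $y$ the map $x\mapsto x^y$ is a bijection of $X$, and $(z^x)^y=(z^y)^{x^y}$ for all $x,y,z$. It is a quandle if moreover $x^x=x$ for all $x$. A subset $X_0\subseteq X$ is a subrack if $x^y\in X_0$ for all $x,y\in X_0$; elements $x_1,\dots,x_n$ generate $X$ if no proper subrack contains them. A finite rack is connected if the directed graph with vertex set $X$ and edges $(x,x^y)$ for $(x,y)\in X\times X$ is connected. The braid group $B_n$ is generated by $\sigma_1,\dots,\sigma_{n-1}$ with relations $\sigma_i\sigma_j=\sigma_j\sigma_i$ for $|i-j|>1$ and $\sigma_i\sigma_{i+1}\sigma_i=\sigma_{i+1}\sigma_i\sigma_{i+1}$; it acts on $X^n$ from the right by $(c_1,\dots,c_i,c_{i+1},\dots,c_n)^{\sigma_i}=(c_1,\dots,c_{i+1},c_i^{c_{i+1}},\dots,c_n)$. The homomorphism $B_n\to S_n$ sends $\sigma_i$ to the transposition $(i\ i+1)$. *)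

From mathcomp Require Import all_boot all_fingroup all_solvable alt.
Set Implicit Arguments.
Unset Strict Implicit.
Unset Printing Implicit Defensive.

(* A finite set X is a finType T, with binary operation op x y = x^y. *)
Section Rack.
Variable T : finType.
Variable op : T -> T -> T.

Definition is_rack : Prop :=
  (forall y, bijective (fun x => op x y)) /\
  (forall x y z, op (op z x) y = op (op z y) (op x y)).

Definition is_quandle : Prop := is_rack /\ forall x, op x x = x.

(* the inverse of x |-> x^y (meaningful when it is a bijection) *)
Definition rinv (y x : T) : T := odflt x [pick z | op z y == x].

Definition subrack (X0 : {set T}) : Prop :=
  forall x y, x \in X0 -> y \in X0 -> op x y \in X0.

Definition generates (xs : seq T) : Prop :=
  forall X0 : {set T}, subrack X0 -> (forall x, x \in xs -> x \in X0) ->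
    X0 = [set: T].

Definition rack_edge : rel T :=
  fun a b => [exists y, op a y == b] || [exists y, op b y == a].

Definition rack_connected : Prop := forall a b : T, connect rack_edge a b.

(* Braid words: (i, true) is sigma_{i+1}, (i, false) its inverse;
   positions are 0-based, so sigma_{i+1} acts on entries i and i+1. *)
Definition braid_word := seq (nat * bool).

Definition valid_word (n : nat) (w : braid_word) : bool :=
  all (fun p => p.1.+1 < n) w.

Definition gen_act (p : nat * bool) (s : seq T) : seq T :=
  let i := p.1 in
  match drop i s with
  | a :: b :: rest =>
      if p.2 then take i s ++ b :: op a b :: rest
      else take i s ++ rinv a b :: a :: rest
  | _ => s
  end.

Definition word_act (w : braid_word) (s : seq T) : seq T :=
  foldl (fun s p => gen_act p s) s w.

End Rack.

(* transposition (i i+1) on positions, and image of a word in S_n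
   (evaluated on a point, with mathcomp's convention (s*t) k = t (s k)) *)
Definition swapn (i k : nat) : nat :=
  if k == i then i.+1 else if k == i.+1 then i else k.

Definition word_perm (w : braid_word) (k : nat) : nat :=
  foldl (fun k p => swapn p.1 k) k w.

Definition in_stab_image (T : finType) (op : T -> T -> T) (n : nat)
    (xs : seq T) (s : 'S_n) : Prop :=
  exists w : braid_word, valid_word n w /\ word_act op w xs = xs /\
    forall k : 'I_n, (s k : nat) = word_perm w k.

From mathcomp Require Import all_boot all_fingroup all_solvable alt.
From mathcomp Require Import zify.
From Stdlib Require Import Classical.
Set Implicit Arguments. Unset Strict Implicit. Unset Printing Implicit Defensive.

(* Braiding the entries of a long tuple only conjugates the image H, and by pigeonhole some
   c occurs more than K times, K a period of all right translations, so we may assume that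
   the tuple starts with K+1 copies of c.  Three equal entries v at positions a < b < c can
   be braided next to each other, and a braid word fixing (v, v, v) has image the 3-cycle
   (a b c).  Since the tail generates the connected rack X, c can be carried to any entry t
   of the tail through right translations by tail entries; done on the whole block of K
   copies this is a pure braid, and taking for t the entry at any position x outside the
   block makes the entries at K-1, K and x equal.  So H contains the 3-cycles (K-1 K x),
   which generate A_n.  In a quandle sigma_1 fixes (c, c, ...) and gives a transposition. *)

Lemma card_perm_gt0 (T : finType) : 0 < #|{perm T}|.
Proof. by apply/card_gt0P; exists 1%g. Qed.

Section RackBasics.
Variables (T : finType) (op : T -> T -> T).
Hypothesis rackT : is_rack op.

Lemma op_inj y : injective (op^~ y).
Proof. by case: (rackT.1 y) => g /can_inj. Qed.

Lemma rinvK y : cancel (rinv op y) (op^~ y).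
Proof.
move=> x; rewrite /rinv; case: pickP => [z /eqP //|no_preimage].
by case: (rackT.1 y) => g _ gK; move: (no_preimage (g x)); rewrite /= gK eqxx.
Qed.

Lemma opK y : cancel (op^~ y) (rinv op y).
Proof. by move=> z; apply: (@op_inj y); rewrite /= rinvK. Qed.

Lemma op_selfdistr x y z : op (op z x) y = op (op z y) (op x y).
Proof. exact: rackT.2. Qed.

Lemma op_self a z : op z (op a a) = op z a.
Proof. by rewrite -[z](rinvK a) -op_selfdistr. Qed.

Lemma op_rinv_self a z : op z (rinv op a a) = op z a.
Proof. by apply: (@op_inj a); rewrite /= op_selfdistr rinvK. Qed.

Lemma iter_op_card_perm v : iter #|{perm T}| (op^~ v) =1 id.
Proof.
pose p : {perm T} := perm (@op_inj v).
move=> x; have -> : iter #|{perm T}| (op^~ v) x = (p ^+ #|{perm T}|)%g x.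
  by rewrite permX; apply: eq_iter => z; rewrite permE.
by rewrite -cardsT expg_cardG ?inE // perm1.
Qed.

Lemma subrack_op_inv (X0 : {set T}) a b :
  subrack op X0 -> b \in X0 -> op a b \in X0 -> a \in X0.
Proof.
move=> subX0 bX0; have opb_inj := @op_inj b.
have opbX0 : (op^~ b) @: X0 = X0.
  apply/eqP; rewrite eqEcard (card_imset _ opb_inj) leqnn andbT.
  by apply/subsetP=> _ /imsetP [x xX0 ->]; apply: subX0.
by rewrite -{1}opbX0 => /imsetP [x xX0 /opb_inj ->].
Qed.

End RackBasics.

Definition slide_up (b : bool) (i m : nat) : braid_word := [seq (k, b) | k <- iota i m].
Definition slide_down (b : bool) (i m : nat) : braid_word := rev (slide_up b i m).

Section BraidAction.
Variables (T : finType) (op : T -> T -> T).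

Lemma gen_act_sigma A x y C :
  gen_act op (size A, true) (A ++ x :: y :: C) = A ++ y :: op x y :: C.
Proof. by rewrite /gen_act /= drop_size_cat // take_size_cat. Qed.

Lemma gen_act_sigmaV A x y C :
  gen_act op (size A, false) (A ++ x :: y :: C) = A ++ rinv op x y :: x :: C.
Proof. by rewrite /gen_act /= drop_size_cat // take_size_cat. Qed.

Lemma word_act_cat w1 w2 s :
  word_act op (w1 ++ w2) s = word_act op w2 (word_act op w1 s).
Proof. by rewrite /word_act foldl_cat. Qed.

Lemma size_gen_act p s : size (gen_act op p s) = size s.
Proof.
case: p => i [] /=; rewrite /gen_act /=; case Ds: (drop i s) => [|a [|b r]] //;
  by rewrite -[in RHS](cat_take_drop i s) Ds !size_cat.
Qed.

Lemma size_word_act w s : size (word_act op w s) = size s.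
Proof. by elim: w s => //= p w IHw s; rewrite IHw size_gen_act. Qed.

Lemma word_act_slide_down A B y C :
  word_act op (slide_down true (size A) (size B)) (A ++ B ++ y :: C) =
  A ++ y :: map (op^~ y) B ++ C.
Proof.
elim/last_ind: B C => [//|B b IHB] C.
rewrite size_rcons -addn1 /slide_down /slide_up iotaD map_cat rev_cat /=.
by rewrite cat_rcons catA -size_cat gen_act_sigma -catA IHB map_rcons cat_rcons.
Qed.

Lemma word_act_slide_upV A y B C :
  word_act op (slide_up false (size A) (size B)) (A ++ y :: B ++ C) =
  A ++ map (rinv op y) B ++ y :: C.
Proof.
elim: B A => [//|b B IHB] A.
rewrite /slide_up /= gen_act_sigmaV -(size_rcons A (rinv op y b)) -cat_rcons.
by rewrite IHB cat_rcons.
Qed.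

Lemma word_act_slide_up A y B C :
  word_act op (slide_up true (size A) (size B)) (A ++ y :: B ++ C) =
  A ++ B ++ foldl op y B :: C.
Proof.
elim: B A y => [//|b B IHB] A y.
by rewrite /slide_up /= gen_act_sigma -(size_rcons A b) -cat_rcons IHB cat_rcons.
Qed.

End BraidAction.

Lemma swapnK i : involutive (swapn i).
Proof. by move=> k; rewrite /swapn; do ! case: eqP; lia. Qed.

Lemma swapn_out i k : k != i -> k != i.+1 -> swapn i k = k.
Proof. by rewrite /swapn => /negbTE -> /negbTE ->. Qed.

Lemma word_permE w k : word_perm w k = foldl (fun k i => swapn i k) k (map fst w).
Proof. by elim: w k => //= p w IHw k; rewrite IHw. Qed.

Lemma word_perm_cat w1 w2 k :
  word_perm (w1 ++ w2) k = word_perm w2 (word_perm w1 k).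
Proof. by rewrite /word_perm foldl_cat. Qed.

Lemma word_perm_rev_cat w1 w2 k :
  map fst w1 = rev (map fst w2) -> word_perm (w1 ++ w2) k = k.
Proof.
rewrite !word_permE map_cat foldl_cat => ->.
elim: (map fst w2) k => //= i L IHL k.
by rewrite rev_cons -cats1 foldl_cat /= swapnK IHL.
Qed.

Lemma word_perm_slide_up_first b i m : word_perm (slide_up b i m) i = i + m.
Proof.
rewrite word_permE -map_comp map_id.
by elim: m i => [|m IHm] i /=; rewrite ?addn0 // /swapn eqxx IHm addSnnS.
Qed.

Lemma word_perm_slide_up_out b i m k :
  (k < i) || (i + m < k) -> word_perm (slide_up b i m) k = k.
Proof.
rewrite word_permE -map_comp map_id.
by elim: m i => //= m IHm i k_out; rewrite swapn_out ?IHm; lia.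
Qed.

Lemma word_perm_slide_down_last b i m : word_perm (slide_down b i m) (i + m) = i.
Proof.
rewrite word_permE map_rev -map_comp map_id.
elim: m => [|m IHm]; first by rewrite addn0.
rewrite -addn1 iotaD rev_cat /= -[in RHS]IHm; congr foldl.
by rewrite /swapn; do !case: eqP; lia.
Qed.

Lemma word_perm_slide_down_out b i m k :
  (k < i) || (i + m < k) -> word_perm (slide_down b i m) k = k.
Proof.
rewrite word_permE map_rev -map_comp map_id.
elim: m => [//|m IHm] k_out.
by rewrite -addn1 iotaD rev_cat /= swapn_out ?IHm; lia.
Qed.

Lemma valid_word_cat n w1 w2 :
  valid_word n (w1 ++ w2) = valid_word n w1 && valid_word n w2.
Proof. exact: all_cat. Qed.

Lemma valid_slide_up n b i m : i + m < n -> valid_word n (slide_up b i m).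
Proof.
by move=> lt_n; apply/allP=> p /mapP [k]; rewrite mem_iota => range_k -> /=; lia.
Qed.

Lemma valid_slide_down n b i m : i + m < n -> valid_word n (slide_down b i m).
Proof. by move=> lt_n; rewrite /valid_word all_rev; apply: valid_slide_up. Qed.

Import GroupScope.

Section StabilizerImage.
Variable n : nat.

Definition swap_perm (i : nat) : 'S_n :=
  match @insub _ (fun k => k < n) 'I_n i, @insub _ (fun k => k < n) 'I_n i.+1 with
  | Some a, Some b => tperm a b
  | _, _ => 1
  end.

Lemma swap_permE i (a b : 'I_n) : val a = i -> val b = i.+1 -> swap_perm i = tperm a b.
Proof.
move=> <- ab; rewrite /swap_perm insubT ?ltn_ord // => lt_a.
by rewrite insubT -?ab ?ltn_ord // => lt_b; congr tperm; apply: val_inj.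
Qed.

Lemma swap_perm_val i (k : 'I_n) : i.+1 < n -> (swap_perm i k : nat) = swapn i k.
Proof.
move=> lt_i; have lt_i' : i < n by lia.
rewrite (@swap_permE i (Ordinal lt_i') (Ordinal lt_i)) //=.
case: tpermP => [->|->|ne_i ne_Si]; rewrite /swapn /=; first by rewrite eqxx.
  by rewrite eqxx; case: eqP; lia.
have /negbTE -> : (k : nat) != i by apply/eqP=> eq_i; apply/ne_i/val_inj.
by have /negbTE -> : (k : nat) != i.+1 by apply/eqP=> eq_i; apply/ne_Si/val_inj.
Qed.

Lemma swap_permV i : (swap_perm i)^-1 = swap_perm i.
Proof.
rewrite /swap_perm; case: (insub i) => [a|]; last exact: invg1.
by case: (insub i.+1) => [b|]; rewrite ?tpermV ?invg1.
Qed.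

Definition braid_perm (w : braid_word) : 'S_n := \prod_(p <- w) swap_perm p.1.

Lemma braid_perm_cat w1 w2 : braid_perm (w1 ++ w2) = braid_perm w1 * braid_perm w2.
Proof. exact: big_cat. Qed.

Lemma braid_perm_val w (k : 'I_n) :
  valid_word n w -> (braid_perm w k : nat) = word_perm w k.
Proof.
elim: w k => [|p w IHw] k /=; first by rewrite /braid_perm big_nil perm1.
by case/andP=> lt_p valid_w; rewrite /braid_perm big_cons permM IHw ?swap_perm_val.
Qed.

Lemma braid_perm_pure w :
  valid_word n w -> (forall k, word_perm w k = k) -> braid_perm w = 1.
Proof.
by move=> valid_w pure_w; apply/permP=> k; apply: val_inj; rewrite /= braid_perm_val ?perm1.
Qed.

Definition braid_inv (w : braid_word) : braid_word := rev [seq (p.1, ~~ p.2) | p <- w].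

Lemma valid_braid_inv w : valid_word n (braid_inv w) = valid_word n w.
Proof. by rewrite /valid_word all_rev all_map. Qed.

Lemma braid_perm_inv w : braid_perm (braid_inv w) = (braid_perm w)^-1.
Proof.
elim: w => [|p w IHw]; first by rewrite /braid_perm big_nil invg1.
rewrite /braid_inv /= rev_cons -cats1 braid_perm_cat -/(braid_inv w) IHw.
by rewrite /braid_perm !big_cons !big_nil !mulg1 invMg swap_permV.
Qed.

Lemma in_stab_imageP (T : finType) (op : T -> T -> T) xs s :
  in_stab_image op xs s <->
  exists w, [/\ valid_word n w, word_act op w xs = xs & s = braid_perm w].
Proof.
split=> [[w [valid_w [fix_w perm_w]]]|[w [valid_w fix_w ->]]]; exists w.
  by split=> //; apply/permP=> k; apply: val_inj; rewrite /= perm_w braid_perm_val.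
by do 2!split=> //; move=> k; rewrite braid_perm_val.
Qed.

Section Rack.
Variables (T : finType) (op : T -> T -> T).
Hypothesis rackT : is_rack op.

Lemma gen_act_inv p s :
  p.1.+1 < size s -> gen_act op (p.1, ~~ p.2) (gen_act op p s) = s.
Proof.
case: p => i b /= lt_i.
have size_take_i : size (take i s) = i by rewrite size_take ifT //; lia.
have : 1 < size (drop i s) by rewrite size_drop; lia.
move: (cat_take_drop i s) size_take_i; set A := take i s.
case: (drop i s) => [|x [|y C]] //= <- <- _.
by case: b; rewrite /= ?gen_act_sigma ?gen_act_sigmaV ?opK ?gen_act_sigma ?rinvK.
Qed.

Lemma word_act_braid_inv w s :
  valid_word (size s) w -> word_act op (braid_inv w) (word_act op w s) = s.
Proof.
elim: w s => [//|p w IHw] s /= /andP [lt_p valid_w].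
rewrite /braid_inv /= rev_cons -cats1 -/(braid_inv w) word_act_cat IHw ?size_gen_act //.
exact: gen_act_inv.
Qed.

Lemma stab_image1 xs : @in_stab_image T op n xs 1.
Proof. by apply/in_stab_imageP; exists [::]; rewrite /braid_perm big_nil. Qed.

Lemma stab_imageM xs (s t : 'S_n) :
  in_stab_image op xs s -> in_stab_image op xs t -> in_stab_image op xs (s * t).
Proof.
move=> /in_stab_imageP [w1 [valid1 fix1 ->]] /in_stab_imageP [w2 [valid2 fix2 ->]].
apply/in_stab_imageP; exists (w1 ++ w2).
by rewrite valid_word_cat valid1 valid2 word_act_cat fix1 fix2 braid_perm_cat.
Qed.

Lemma stab_image_word_act w xs (s : 'S_n) :
  size xs = n -> valid_word n w ->
  in_stab_image op (word_act op w xs) s -> in_stab_image op xs (s ^ (braid_perm w)^-1).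
Proof.
move=> size_xs valid_w /in_stab_imageP [u [valid_u fix_u ->]].
apply/in_stab_imageP; exists (w ++ u ++ braid_inv w); split.
- by rewrite !valid_word_cat valid_w valid_u valid_braid_inv valid_w.
- by rewrite !word_act_cat fix_u word_act_braid_inv ?size_xs.
- by rewrite !braid_perm_cat braid_perm_inv conjgE invgK mulgA.
Qed.

End Rack.
End StabilizerImage.

Definition cycle3 (T : finType) (a b c : T) : {perm T} := tperm a b * tperm b c.

Lemma cycle3J (T : finType) (a b c : T) g : cycle3 a b c ^ g = cycle3 (g a) (g b) (g c).
Proof. by rewrite /cycle3 conjMg !tpermJ. Qed.

Lemma cycle3_rot (T : finType) (a b c : T) :
  a != b -> b != c -> a != c -> cycle3 a b c = cycle3 b c a.
Proof.
move=> ne_ab ne_bc ne_ac; rewrite /cycle3.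
have -> : tperm a b = tperm c a ^ tperm b c.
  by rewrite tpermJ tpermR tpermD 1?eq_sym // tpermC.
by rewrite conjgE tpermV -!mulgA tperm2 mulg1.
Qed.

(* Fixes (a, a, a) in any rack, because z^(a^a) = z^a = z^(rinv a a); its image is
   (i i+1)(i+1 i+2) since the two squared generators cancel. *)
Definition triple_word (i : nat) : braid_word :=
  [:: (i, true); (i.+1, false); (i, true); (i, true);
      (i.+1, true); (i, false); (i, false); (i.+1, false)].

Section Cycles.
Variables (T : finType) (op : T -> T -> T).
Hypothesis rackT : is_rack op.

Lemma gen_act_sigma1 A x y z C :
  gen_act op ((size A).+1, true) (A ++ x :: y :: z :: C) = A ++ x :: z :: op y z :: C.
Proof. by rewrite -(size_rcons A x) -cat_rcons gen_act_sigma cat_rcons. Qed.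

Lemma gen_act_sigmaV1 A x y z C :
  gen_act op ((size A).+1, false) (A ++ x :: y :: z :: C) = A ++ x :: rinv op y z :: y :: C.
Proof. by rewrite -(size_rcons A x) -cat_rcons gen_act_sigmaV cat_rcons. Qed.

Lemma word_act_triple_word A a C :
  word_act op (triple_word (size A)) (A ++ [:: a; a; a] ++ C) = A ++ [:: a; a; a] ++ C.
Proof.
set b := op a a; set a' := rinv op a a.
have op_ab : op a b = b by rewrite /b op_self.
have op_a'b : op a' b = a by rewrite /b op_self // rinvK.
have op_aa' : op a a' = b by rewrite op_rinv_self.
have rinv_ba : rinv op b a = a' by rewrite -{1}op_a'b opK.
have rinv_bb : rinv op b b = a by rewrite -{2}op_ab opK.
have rinv_ab : rinv op a b = a by rewrite opK.
rewrite /= gen_act_sigma gen_act_sigmaV1 rinv_ba gen_act_sigma op_aa' gen_act_sigma op_a'b.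
rewrite gen_act_sigma1 op_ab gen_act_sigmaV rinv_bb gen_act_sigmaV rinv_ab.
by rewrite gen_act_sigmaV1 rinv_ab.
Qed.

Lemma braid_perm_triple_word n i :
  braid_perm n (triple_word i) = swap_perm n i * swap_perm n i.+1.
Proof.
have swapKr (s : 'S_n) j : s * swap_perm n j * swap_perm n j = s.
  by rewrite -mulgA -{1}swap_permV mulVg mulg1.
by rewrite /braid_perm /triple_word !big_cons big_nil mulg1 /= !mulgA !swapKr.
Qed.

Lemma stab_image_cycle3_adjacent n A a C (i0 i1 i2 : 'I_n) :
  size (A ++ [:: a; a; a] ++ C) = n ->
  val i0 = size A -> val i1 = (size A).+1 -> val i2 = (size A).+2 ->
  in_stab_image op (A ++ [:: a; a; a] ++ C) (cycle3 i0 i1 i2).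
Proof.
move=> size_n i0E i1E i2E; apply/in_stab_imageP; exists (triple_word (size A)); split.
- by move: size_n; rewrite /valid_word /= size_cat /=; lia.
- exact: word_act_triple_word.
- by rewrite braid_perm_triple_word (swap_permE i0E i1E) (swap_permE i1E i2E).
Qed.

Lemma stab_image_cycle3_cat n A B C D v (a b c : 'I_n) :
  size (A ++ v :: B ++ v :: C ++ v :: D) = n ->
  val a = size A -> val b = size A + size B + 1 -> val c = size A + size B + size C + 2 ->
  in_stab_image op (A ++ v :: B ++ v :: C ++ v :: D) (cycle3 a b c).
Proof.
set xs := A ++ _; move=> size_xs aE bE cE.
have size_n : size A + size B + size C + size D + 3 = n.
  by rewrite -size_xs /xs !size_cat /= !size_cat /= size_cat /=; lia.
pose w := slide_down true (size A + size B + 2) (size C) ++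
          slide_up false (size A) (size B).
have valid_w : valid_word n w.
  by rewrite valid_word_cat valid_slide_down ?valid_slide_up //; lia.
have act_w : word_act op w xs =
    (A ++ map (rinv op v) B) ++ [:: v; v; v] ++ (map (op^~ v) C ++ D).
  have -> : xs = (A ++ v :: B ++ [:: v]) ++ C ++ v :: D by rewrite /xs -!catA /= -catA.
  rewrite word_act_cat (_ : _ + 2 = size (A ++ v :: B ++ [:: v])); last first.
    by rewrite !size_cat /= size_cat /=; lia.
  rewrite word_act_slide_down -catA /= -catA /= word_act_slide_upV.
  by rewrite -catA.
have lt_b' : size A + size B < n by lia.
have lt_c' : size A + size B + 2 < n by lia.
have stab_w : in_stab_image op (word_act op w xs)
    (cycle3 (Ordinal lt_b') b (Ordinal lt_c')).
  rewrite act_w; apply: stab_image_cycle3_adjacent; rewrite -?act_w ?size_word_act //;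
    rewrite size_cat size_map //=.
  - by rewrite bE addn1.
  - by rewrite addn2.
have := stab_image_word_act rackT size_xs valid_w stab_w.
have braid_perm_wE k : braid_perm n w k = word_perm (slide_up false (size A) (size B))
    (word_perm (slide_down true (size A + size B + 2) (size C)) k) :> nat.
  by rewrite braid_perm_val // word_perm_cat.
have w_a : braid_perm n w a = Ordinal lt_b'.
  apply: val_inj; rewrite /= braid_perm_wE aE word_perm_slide_down_out; last by lia.
  exact: word_perm_slide_up_first.
have w_b : braid_perm n w b = b.
  apply: val_inj; rewrite /= braid_perm_wE bE.
  by rewrite word_perm_slide_down_out ?word_perm_slide_up_out //; lia.
have w_c : braid_perm n w c = Ordinal lt_c'.
  apply: val_inj; rewrite /= braid_perm_wE cE.
  rewrite (_ : _ + size C + 2 = size A + size B + 2 + size C); last by lia.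
  by rewrite word_perm_slide_down_last word_perm_slide_up_out //; lia.
by rewrite cycle3J -w_a -w_c !permK -{1}w_b permK.
Qed.

Lemma stab_image_cycle3 n x0 v xs (a b c : 'I_n) :
  size xs = n -> a < b < c -> nth x0 xs a = v -> nth x0 xs b = v -> nth x0 xs c = v ->
  in_stab_image op xs (cycle3 a b c).
Proof.
move=> size_xs /andP [lt_ab lt_bc] xs_a xs_b xs_c.
have drop_split i j : i <= j < n ->
    drop i xs = take (j - i) (drop i xs) ++ nth x0 xs j :: drop j.+1 xs.
  move=> /andP [le_ij lt_jn].
  by rewrite -[LHS](cat_take_drop (j - i)) drop_drop subnK // (@drop_nth _ x0 j) ?size_xs.
have xsE : xs = take a xs ++ v :: take (b - a.+1) (drop a.+1 xs) ++
                v :: take (c - b.+1) (drop b.+1 xs) ++ v :: drop c.+1 xs.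
  rewrite -{1}[xs]drop0 (drop_split 0 a) ?ltn_ord // subn0 drop0 xs_a.
  rewrite {1}(drop_split a.+1 b) ?lt_ab ?ltn_ord // xs_b.
  by rewrite {1}(drop_split b.+1 c) ?lt_bc ?ltn_ord // xs_c.
have lt_cn := ltn_ord c.
rewrite xsE; apply: stab_image_cycle3_cat; rewrite -?xsE //;
  by rewrite !size_takel ?size_drop ?size_xs /=; lia.
Qed.

End Cycles.

Lemma stab_image_tperm_equal (T : finType) (op : T -> T -> T) n A v C (i j : 'I_n) :
  is_quandle op -> size (A ++ v :: v :: C) = n -> val i = size A -> val j = (size A).+1 ->
  in_stab_image op (A ++ v :: v :: C) (tperm i j).
Proof.
move=> [_ opvv] size_n iE jE; apply/in_stab_imageP; exists [:: (size A, true)]; split.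
- by move: size_n; rewrite /valid_word /= andbT size_cat /=; lia.
- by rewrite /= gen_act_sigma opvv.
- by rewrite /braid_perm big_seq1 (swap_permE iE jE).
Qed.

Section EvenPermutations.
Variables (n : nat) (P : 'S_n -> Prop).
Hypotheses (P1 : P 1) (PM : forall s t, P s -> P t -> P (s * t)).

Lemma mulg_closedX s k : P s -> P (s ^+ k).
Proof. by move=> Ps; elim: k => [|k IHk]; rewrite ?expg0 ?expgS //; apply: PM. Qed.

Lemma mulg_closedV s : P s -> P s^-1.
Proof.
move=> Ps; suff -> : s^-1 = s ^+ #[s].-1 by apply: mulg_closedX.
by apply: (mulgI s); rewrite mulgV -expgS prednK ?order_gt0 ?expg_order.
Qed.

Lemma even_closed_all_of_odd :
  (forall s, ~~ odd_perm s -> P s) -> (exists2 t, P t & odd_perm t) -> forall s, P s.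
Proof.
move=> P_even [t Pt odd_t] s; case: (boolP (odd_perm s)) => [odd_s|]; last exact: P_even.
rewrite -(mulgKV t s); apply: PM Pt; apply: P_even.
by rewrite odd_permM odd_permV odd_s odd_t.
Qed.

Lemma even_closed_Alt_or_all : (forall s, ~~ odd_perm s -> P s) ->
  (forall s, P s <-> s \in 'Alt_('I_n)) \/ (forall s, P s).
Proof.
move=> P_even; case: (classic (exists2 t, P t & odd_perm t)) => [odd_in|no_odd].
  by right; apply: even_closed_all_of_odd.
left=> s; rewrite Alt_even; split=> [Ps|]; last exact: P_even.
by apply/negP=> odd_s; apply: no_odd; exists s.
Qed.

Variables r1 r2 : 'I_n.
Hypothesis P_cycle3 : forall x, x != r1 -> x != r2 -> P (cycle3 r1 r2 x).

Lemma mulg_closed_tperm_pair a b : a != r2 -> b != r2 -> P (tperm r2 a * tperm r2 b).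
Proof.
have cycle3E x : cycle3 r1 r2 x = tperm r2 r1 * tperm r2 x by rewrite /cycle3 tpermC.
have P_cycle3V x : x != r1 -> x != r2 -> P (tperm r2 x * tperm r2 r1).
  by move=> x1 x2; have := mulg_closedV (P_cycle3 x1 x2); rewrite cycle3E invMg !tpermV.
move=> a2 b2; case: (eqVneq a b) => [->|ne_ab]; first by rewrite tperm2.
case: (eqVneq a r1) => [a1|a1].
  by rewrite a1 -cycle3E; apply: P_cycle3; rewrite // -a1 eq_sym.
case: (eqVneq b r1) => [->|b1]; first exact: P_cycle3V.
have := PM (P_cycle3V _ a1 a2) (P_cycle3 b1 b2).
by rewrite cycle3E -mulgA [tperm r2 r1 * (_ * _)]mulgA tperm2 mul1g.
Qed.

Definition star_prod (L : seq 'I_n) : 'S_n := \prod_(a <- L) tperm r2 a.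

Lemma star_prod_cat L1 L2 : star_prod (L1 ++ L2) = star_prod L1 * star_prod L2.
Proof. exact: big_cat. Qed.

Lemma odd_star_prod L : all (fun a => a != r2) L -> odd_perm (star_prod L) = odd (size L).
Proof.
elim: L => [|a L IHL] /=; first by rewrite /star_prod big_nil odd_perm1.
by case/andP=> a2 L2; rewrite /star_prod big_cons odd_permM odd_tperm eq_sym a2 IHL.
Qed.

Lemma star_prod_tperm x y :
  exists2 L, all (fun a => a != r2) L & tperm x y = star_prod L.
Proof.
rewrite /star_prod; case: (eqVneq x y) => [<-|ne_xy].
  by exists [::]; rewrite ?tperm1 ?big_nil.
case: (eqVneq x r2) => [x2|x2].
  by exists [:: y]; rewrite /= ?andbT ?big_seq1 -?x2 1?eq_sym.
case: (eqVneq y r2) => [y2|y2].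
  by exists [:: x]; rewrite /= ?andbT ?big_seq1 -?y2 1?tpermC.
exists [:: x; y; x]; rewrite /= ?x2 ?y2 // !big_cons big_nil mulg1 -{1}(tpermV r2 x).
by rewrite -conjgE tpermJ tpermL tpermD // eq_sym.
Qed.

Lemma star_prod_surj s : exists2 L, all (fun a => a != r2) L & s = star_prod L.
Proof.
case: (prod_tpermP s) => ts -> _; elim: ts => [|t ts [L L2 prodE]].
  by exists [::]; rewrite /star_prod ?big_nil.
have [L0 L02 tE] := star_prod_tperm t.1 t.2.
by exists (L0 ++ L); rewrite ?all_cat ?L02 // big_cons tE prodE star_prod_cat.
Qed.

Lemma mulg_closed_star_prod L :
  all (fun a => a != r2) L -> ~~ odd (size L) -> P (star_prod L).
Proof.
move: {2}(size L) (leqnn (size L)) => m; elim: m L => [|m IHm] [|a [|b L]] //=;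
  rewrite /star_prod ?big_nil // => size_L /and3P [a2 b2 L2] even_L.
rewrite !big_cons mulgA; apply: PM (mulg_closed_tperm_pair a2 b2) _.
by apply: IHm L2 _; [apply: ltnW | move: even_L; rewrite negbK].
Qed.

Lemma mulg_closed_even s : ~~ odd_perm s -> P s.
Proof.
by have [L L2 ->] := star_prod_surj s; rewrite odd_star_prod //; apply: mulg_closed_star_prod.
Qed.

End EvenPermutations.

Section Reachability.
Variables (T : finType) (op : T -> T -> T).
Hypothesis rackT : is_rack op.
Variable Y : seq T.

Definition act_edge : rel T := fun a b => has (fun y => op a y == b) Y.

Lemma connect_act_edge_iter y a k : y \in Y -> connect act_edge a (iter k (op^~ y) a).
Proof.
move=> Yy; elim: k => [|k IHk]; first exact: connect0.
by apply: connect_trans IHk (connect1 _); apply/hasP; exists y.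
Qed.

Lemma connect_act_edge_sym : connect_sym act_edge.
Proof.
have back : subrel act_edge (connect [rel a b | act_edge b a]).
  move=> a _ /hasP [y Yy /eqP <-]; rewrite connect_rev /=.
  rewrite -{2}[a](iter_op_card_perm rackT y) -(prednK (card_perm_gt0 T)) iterSr.
  exact: connect_act_edge_iter.
by apply: symmetric_from_pre => a b /(connect_sub back); rewrite connect_rev.
Qed.

Hypothesis genY : generates op Y.

Lemma connect_act_edge_op a z : connect act_edge a (op a z).
Proof.
pose Z := [set z | [forall a, connect act_edge a (op a z)]].
suff : z \in Z by rewrite inE => /forallP.
rewrite (genY (X0 := Z)) ?inE //.
- move=> z1 z2; rewrite !inE => /forallP a_z1 /forallP a_z2; apply/forallP=> a0.
  rewrite -[a0](rinvK rackT z2) -op_selfdistr //.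
  apply: connect_trans (a_z2 _); apply: connect_trans (a_z1 _).
  by rewrite connect_act_edge_sym a_z2.
- by move=> y Yy; rewrite inE; apply/forallP=> a0; apply/connect1/hasP; exists y.
Qed.

Lemma connect_act_edge_all : rack_connected op -> forall a b, connect act_edge a b.
Proof.
move=> connT a b; apply: connect_sub (connT a b) => {}a {}b /orP [] /existsP [z /eqP <-].
  exact: connect_act_edge_op.
by rewrite connect_act_edge_sym; apply: connect_act_edge_op.
Qed.

End Reachability.

Section PureBraids.
Variables (T : finType) (op : T -> T -> T).
Hypothesis rackT : is_rack op.
Variable K : nat.
Hypothesis periodK : forall v, iter K (op^~ v) =1 id.

Lemma foldl_op_nseq k v y : foldl op y (nseq k v) = iter k (op^~ v) y.
Proof. by elim: k y => // k IHk y; rewrite iterSr -IHk. Qed.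

(* y moves to the front, turning the block into copies of w^y and Y1 into Y1^y; it then
   crosses back over the block, which leaves y unchanged because K is a period, and
   finally undoes its action on Y1. *)
Lemma pure_braid_block_step w Y1 y Y2 : exists g,
  [/\ valid_word (K + size (Y1 ++ y :: Y2)) g,
      word_act op g (nseq K w ++ Y1 ++ y :: Y2) = nseq K (op w y) ++ Y1 ++ y :: Y2
    & forall k, word_perm g k = k].
Proof.
exists (slide_down true 0 (K + size Y1) ++ slide_up true 0 K ++ slide_up false K (size Y1)).
split.
- rewrite !valid_word_cat valid_slide_down ?valid_slide_up //; rewrite size_cat /=; lia.
- have := @word_act_slide_down _ op [::] (nseq K w ++ Y1) y Y2.
  rewrite /= size_cat size_nseq -catA map_cat map_nseq -[(nseq K _ ++ _) ++ Y2]catA.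
  rewrite !word_act_cat => ->.
  have := @word_act_slide_up _ op [::] y (nseq K (op w y)) (map (op^~ y) Y1 ++ Y2).
  rewrite /= size_nseq foldl_op_nseq periodK => ->.
  have := @word_act_slide_upV _ op (nseq K (op w y)) y (map (op^~ y) Y1) Y2.
  by rewrite size_nseq size_map -map_comp (eq_map (opK rackT y)) map_id => ->.
- move=> k; apply: word_perm_rev_cat.
  by rewrite map_cat /slide_down /slide_up map_rev -!map_comp !map_id -iotaD.
Qed.

Lemma stab_image_block_step n w y Y (s : 'S_n) :
  y \in Y -> K + size Y = n ->
  in_stab_image op (nseq K (op w y) ++ Y) s -> in_stab_image op (nseq K w ++ Y) s.
Proof.
case/splitPr=> Y1 Y2 size_n.
have [g [valid_g act_g pure_g]] := pure_braid_block_step w Y1 y Y2.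
rewrite -act_g => /stab_image_word_act.
have size_w : size (nseq K w ++ Y1 ++ y :: Y2) = n by rewrite size_cat size_nseq.
rewrite size_n in valid_g.
by rewrite braid_perm_pure ?invg1 ?conjg1 // => /(_ rackT size_w valid_g).
Qed.

Lemma stab_image_block_connect n w t Y (s : 'S_n) :
  K + size Y = n -> connect (act_edge op Y) w t ->
  in_stab_image op (nseq K t ++ Y) s -> in_stab_image op (nseq K w ++ Y) s.
Proof.
move=> size_n /connectP [p p_path ->] {t}.
elim: p w p_path => //= _ p IHp w /andP [/hasP [y Yy /eqP <-] p_path] stab_last.
exact: (stab_image_block_step Yy size_n (IHp _ p_path stab_last)).
Qed.

End PureBraids.

Lemma count_mem_pigeonhole (T : finType) (s : seq T) K :
  #|T| * K < size s -> exists c, K < count_mem c s.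
Proof.
move=> lt_size; apply/existsP; apply: contraLR lt_size => /existsPn few; rewrite -leqNgt.
rewrite -sum1_size (partition_big id predT) //= -sum_nat_const leq_sum // => c _.
by rewrite sum1_count leqNgt few.
Qed.

Lemma split_first_mem (T : eqType) (c : T) s :
  c \in s -> exists B C, s = B ++ c :: C /\ c \notin B.
Proof.
move=> cs; exists (take (index c s) s), (drop (index c s).+1 s); split.
  by rewrite -{2}(nth_index c cs) -drop_nth ?index_mem // cat_take_drop.
by rewrite in_take // ltnn.
Qed.

Lemma cat_nseq_cons (T : Type) m (c : T) X : nseq m c ++ c :: X = nseq m.+1 c ++ X.
Proof. by rewrite -cat1s catA -[[:: c]]/(nseq 1 c) -nseqD addn1. Qed.

Section Gathering.
Variables (T : finType) (op : T -> T -> T).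

Lemma gather m c S r : r <= count_mem c S -> exists g,
  valid_word (m + size S) g /\
  exists S', word_act op g (nseq m c ++ S) = nseq (m + r) c ++ S'.
Proof.
elim: r m S => [|r IHr] m S le_r; first by exists [::]; split=> //; exists S; rewrite addn0.
have [B [C [SE cNB]]] : exists B C, S = B ++ c :: C /\ c \notin B.
  by apply: split_first_mem; rewrite -has_pred1 has_count; lia.
have le_r' : r <= count_mem c (map (op^~ c) B ++ C).
  move: le_r; rewrite SE !count_cat /= eqxx (count_memPn cNB); lia.
have [g [valid_g [S' act_g]]] := IHr m.+1 _ le_r'.
exists (slide_down true m (size B) ++ g); split.
  rewrite valid_word_cat valid_slide_down ?SE ?size_cat /=; last by lia.
  by move: valid_g; rewrite !size_cat size_map /= addSn !addnS.
exists S'; rewrite word_act_cat SE.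
have := @word_act_slide_down _ op (nseq m c) B c C; rewrite size_nseq => ->.
by rewrite cat_nseq_cons act_g addSnnS.
Qed.

Hypothesis rackT : is_rack op.

Lemma generates_gen_act p s : generates op s -> generates op (gen_act op p s).
Proof.
move=> gen_s X0 subX0 X0_act; apply: gen_s => // x.
case: p X0_act => i b; rewrite /gen_act /=.
case Ds: (drop i s) => [|y [|z C]] X0_act; try exact: X0_act.
have [X0_y X0_z] : y \in X0 /\ z \in X0.
  case: b X0_act => X0_act.
  - have X0_z : z \in X0 by apply: X0_act; rewrite mem_cat !inE eqxx orbT.
    split=> //; apply: subrack_op_inv subX0 X0_z _ => //.
    by apply: X0_act; rewrite mem_cat !inE eqxx !orbT.
  - have X0_y : y \in X0 by apply: X0_act; rewrite mem_cat !inE eqxx !orbT.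
    split=> //; rewrite -(rinvK rackT y z); apply: subX0 X0_y.
    by apply: X0_act; rewrite mem_cat !inE eqxx orbT.
rewrite -(cat_take_drop i s) Ds mem_cat !inE.
case/orP=> [x_take | /or3P [/eqP -> // | /eqP -> // | x_C]];
  by apply: X0_act; case: b; rewrite mem_cat !inE ?x_take ?x_C ?orbT.
Qed.

Lemma generates_word_act w s : generates op s -> generates op (word_act op w s).
Proof. by elim: w s => //= p w IHw s gen_s; apply/IHw/generates_gen_act. Qed.

End Gathering.

Section GatheredTuple.
Variables (T : finType) (op : T -> T -> T).
Hypotheses (rackT : is_rack op) (connT : rack_connected op).
Variable K : nat.
Hypotheses (periodK : forall v, iter K (op^~ v) =1 id) (lt1K : 1 < K).
Variables (n : nat) (c : T) (S : seq T).
Hypotheses (size_n : size (nseq K.+1 c ++ S) = n)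
           (gen_cS : generates op (nseq K.+1 c ++ S)).

Lemma stab_image_cycle3_block (r1 r2 x : 'I_n) :
  val r1 = K.-2 -> val r2 = K.-1 -> x != r1 -> x != r2 ->
  in_stab_image op (nseq K.+1 c ++ S) (cycle3 r1 r2 x).
Proof.
move=> r1E r2E x1 x2; set Y := c :: S.
have zE : nseq K.+1 c ++ S = nseq K c ++ Y by rewrite cat_nseq_cons.
have size_Y : K + size Y = n by rewrite -size_n zE size_cat size_nseq.
have genY : generates op Y.
  move=> X0 subX0 X0_Y; apply: gen_cS => // u; rewrite zE mem_cat mem_nseq.
  by case/orP=> [/andP [_ /eqP ->]|]; apply: X0_Y; rewrite ?mem_head.
set t := nth c (nseq K c ++ Y) x.
rewrite zE; apply: (stab_image_block_connect rackT periodK (t := t) size_Y).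
  exact: connect_act_edge_all.
have nth_block k : k < K -> nth c (nseq K t ++ Y) k = t.
  by move=> lt_kK; rewrite nth_cat size_nseq lt_kK nth_nseq lt_kK.
have nth_x : nth c (nseq K t ++ Y) x = t.
  by rewrite /t !nth_cat !size_nseq; case: ifP => // lt_xK; rewrite !nth_nseq lt_xK.
have size_t : size (nseq K t ++ Y) = n by rewrite size_cat size_nseq size_Y.
have nth_r1 : nth c (nseq K t ++ Y) r1 = t by apply: nth_block; rewrite r1E; lia.
have nth_r2 : nth c (nseq K t ++ Y) r2 = t by apply: nth_block; rewrite r2E; lia.
have ne_x1 : (x : nat) != K.-2 by rewrite -r1E; exact: x1.
have ne_x2 : (x : nat) != K.-1 by rewrite -r2E; exact: x2.
have [lt_x|ge_x] := ltnP x K.-2.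
  have r12 : r1 != r2 by apply/eqP=> /(congr1 val); rewrite r1E r2E; lia.
  rewrite -cycle3_rot //.
  by apply: (stab_image_cycle3 rackT size_t _ nth_x nth_r1 nth_r2); rewrite r1E r2E; lia.
by apply: (stab_image_cycle3 rackT size_t _ nth_r1 nth_r2 nth_x); rewrite r1E r2E; lia.
Qed.

Lemma stab_image_even_block (s : 'S_n) :
  ~~ odd_perm s -> in_stab_image op (nseq K.+1 c ++ S) s.
Proof.
have lt_Kn : K < n by rewrite -size_n size_cat size_nseq; lia.
have lt_r1 : K.-2 < n by lia.
have lt_r2 : K.-1 < n by lia.
have P1 := @stab_image1 n T op (nseq K.+1 c ++ S).
have PM := @stab_imageM n T op (nseq K.+1 c ++ S).
by apply: (mulg_closed_even P1 PM (r1 := Ordinal lt_r1) (r2 := Ordinal lt_r2)) => x x1 x2;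
  apply: stab_image_cycle3_block.
Qed.

Lemma stab_image_odd_block : is_quandle op ->
  exists2 t : 'S_n, in_stab_image op (nseq K.+1 c ++ S) t & odd_perm t.
Proof.
move=> quandleT; have lt1n : 1 < n by rewrite -size_n size_cat size_nseq; lia.
exists (tperm (Ordinal (ltnW lt1n)) (Ordinal lt1n)); last by rewrite odd_tperm.
have zE : nseq K.+1 c ++ S = [::] ++ c :: c :: nseq K.-1 c ++ S.
  by rewrite -[K in LHS](prednK (ltnW lt1K)).
by rewrite zE; apply: stab_image_tperm_equal; rewrite -?zE.
Qed.

End GatheredTuple.

Theorem theorem2p4 (T : finType) (op : T -> T -> T) :
  is_rack op -> rack_connected op ->
  exists N : nat, forall n : nat, N <= n ->
    forall xs : seq T, size xs = n -> generates op xs ->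
      ((forall s : 'S_n, in_stab_image op xs s <-> s \in ('Alt_('I_n))%g) \/
       (forall s : 'S_n, in_stab_image op xs s)) /\
      (is_quandle op -> forall s : 'S_n, in_stab_image op xs s).
Proof.
move=> rackT connT.
(* Any multiple of #|{perm T}| is a period; doubling it makes it at least 2. *)
pose K := #|{perm T}|.*2.
have periodK v : iter K (op^~ v) =1 id.
  by move=> y; rewrite /K -addnn iterD !(iter_op_card_perm rackT).
have lt1K : 1 < K by rewrite /K -addnn; have := card_perm_gt0 T; lia.
exists (#|T| * K.+1).+1 => n le_N_n xs size_xs gen_xs.
have [c lt_K_c] : exists c, K < count_mem c xs by apply: count_mem_pigeonhole; lia.
have [g [valid_g [S act_g]]] := gather op 0 lt_K_c.
rewrite add0n size_xs in valid_g; rewrite -[nseq 0 c ++ xs]/xs add0n in act_g.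
have size_z : size (nseq K.+1 c ++ S) = n by rewrite -act_g size_word_act.
have gen_z : generates op (nseq K.+1 c ++ S) by rewrite -act_g; apply: generates_word_act.
have from_z s : in_stab_image op (nseq K.+1 c ++ S) s ->
    in_stab_image op xs (s ^ (braid_perm n g)^-1).
  by rewrite -act_g; apply: stab_image_word_act.
have even_xs (s : 'S_n) : ~~ odd_perm s -> in_stab_image op xs s.
  move=> even_s; rewrite -(conjgK (braid_perm n g) s).
  by apply/from_z/stab_image_even_block; rewrite ?odd_permJ.
have PM := @stab_imageM n T op xs.
split; first exact: even_closed_Alt_or_all PM even_xs.
move=> quandleT; apply: (even_closed_all_of_odd PM even_xs).
have [t stab_t odd_t] := stab_image_odd_block lt1K size_z quandleT.
by exists (t ^ (braid_perm n g)^-1); [apply: from_z | rewrite odd_permJ].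
Qed.
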